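(* Let $f\in\mathbb{R}[X_1,\dots,X_n]$ be a non-constant polynomial of degree $2d$ and let $r\in\mathbb{R}$. Suppose there exist nonnegative real numbers $a_{\alpha,i}$, $\alpha\in\Delta$, $i=1,\dots,n$, with $a_{\alpha,i}=0$ if and only if $\alpha_i=0$, such that, writing $a_\alpha=(a_{\alpha,1},\dots,a_{\alpha,n})$, (1) $(2d)^{2d}a_{\alpha}^{\alpha}=|f_{\alpha}|^{2d}\alpha^{\alpha}$ for each $\alpha\in\Delta$ with $|\alpha|=2d$; (2) $f_{2d,i}\ge\sum_{\alpha\in\Delta}a_{\alpha,i}$ for $i=1,\dots,n$; and (3) $f_0-r\ge\sum_{\alpha\in\Delta^{<2d}}(2d-|\alpha|)\left[\frac{|f_{\alpha}|^{2d}\alpha^{\alpha}}{(2d)^{2d}a_{\alpha}^{\alpha}}\right]^{\frac{1}{2d-|\alpha|}}$, where $\Delta^{<2d}:=\{\alpha\in\Delta:|\alpha|<2d\}$. Then $f-r$ is SOBS.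
   Context: $\mathbb{N}=\{0,1,2,\dots\}$. For $\alpha\in\mathbb{N}^n$ write $\underline{X}^\alpha=X_1^{\alpha_1}\cdots X_n^{\alpha_n}$, $|\alpha|=\sum_i\alpha_i$, and for $a\in\mathbb{R}^n$, $a^\alpha=\prod_i a_i^{\alpha_i}$ with $0^0=1$ (so $\alpha^\alpha=\prod_i\alpha_i^{\alpha_i}$). For $f=\sum_\alpha f_\alpha\underline{X}^\alpha$ of degree $2d$: $f_0$ is the constant term, $f_{2d,i}$ is the coefficient of $X_i^{2d}$, $\Omega=\{\alpha: f_\alpha\ne0\}\setminus\{\underline{0},2d\epsilon_1,\dots,2d\epsilon_n\}$ ($\epsilon_i$ the standard unit vectors), and $\Delta=\{\alpha\in\Omega:\ f_\alpha<0\text{ or }\alpha_i\text{ odd for some }i\}$. SOBS means a finite sum of squares of polynomials of the form $a\underline{X}^\alpha-b\underline{X}^\beta$, $a,b\in\mathbb{R}$. *)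

From HB Require Import structures.
From Stdlib Require Import Reals.
From mathcomp Require Import all_boot all_order all_algebra.
From mathcomp Require Import Rstruct.
From mathcomp Require Import mpoly.
Set Implicit Arguments. Unset Strict Implicit. Unset Printing Implicit Defensive.
Import Order.TTheory GRing.Theory Num.Theory.
Local Open Scope ring_scope.

(* a^alpha = prod_i a_i^alpha_i, with 0^0 = 1 (x ^+ 0 = 1) *)
Definition mpow (n : nat) (a : 'I_n -> R) (alpha : 'X_{1..n}) : R :=
  \prod_(i < n) (a i) ^+ (alpha i).

Definition mself (n : nat) (alpha : 'X_{1..n}) : R :=
  \prod_(i < n) ((alpha i)%:R) ^+ (alpha i).

Definition mpure (n : nat) (k : nat) (i : 'I_n) : 'X_{1..n} := (U_(i) *+ k)%MM.

Definition inOmega (n d : nat) (f : {mpoly R[n]}) (alpha : 'X_{1..n}) : bool :=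
  [&& f@_alpha != 0, alpha != 0%MM & [forall i : 'I_n, alpha != mpure (2 * d) i]].

Definition inDelta (n d : nat) (f : {mpoly R[n]}) (alpha : 'X_{1..n}) : bool :=
  inOmega d f alpha && ((f@_alpha < 0) || [exists i : 'I_n, odd (alpha i)]).

Definition SOBS (n : nat) (p : {mpoly R[n]}) : Prop :=
  exists s : seq (R * 'X_{1..n} * R * 'X_{1..n}),
    p = \sum_(t <- s) (t.1.1.1 *: 'X_[t.1.1.2] - t.1.2 *: 'X_[t.2]) ^+ 2.

From HB Require Import structures.
From Stdlib Require Import Reals.
From mathcomp Require Import all_boot all_order all_algebra.
From mathcomp Require Import Rstruct.
From mathcomp Require Import mpoly.
From mathcomp Require Import ring.
Import Order.TTheory GRing.Theory Num.Theory.
Local Open Scope ring_scope.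
Set Implicit Arguments. Unset Strict Implicit.

(* For each alpha in Delta, the polynomial
     sum_i a_(alpha,i) X_i^2d + c_alpha + f_alpha X^alpha
   (c_alpha the summand of (3)) is, after taking 2d-th roots of its coefficients
   and flipping the signs of some variables, Hurwitz's AM-GM form
     sum_i alpha_i y_i^2d + K t^2d - 2d y^alpha t^K,   K = 2d - |alpha|,
   which is a sum of squares of binomials: merging two variables at a time reduces it
   to two-variable AM-GM forms, which telescope into squares of binomials.
   Conditions (2) and (3) say exactly that subtracting all these polynomials from
   f - r leaves nonnegative coefficients at 0 and at the X_i^2d; the other remaining
   monomials lie in Omega \ Delta, hence have even exponents and positive coefficients,
   and are squares themselves. *)

Section SOBSClosure.
Variable n : nat.
Implicit Types (p q u v : {mpoly R[n]}).

Definition monom p := exists (c : R) (m : 'X_{1..n}), p = c *: 'X_[m].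

Lemma monomC (c : R) : monom c%:MP.
Proof. by exists c, 0%MM; rewrite mpolyX0 -alg_mpolyC. Qed.

Lemma monomM u v : monom u -> monom v -> monom (u * v).
Proof.
move=> [c [m ->]] [c' [m' ->]]; exists (c * c'), (m + m')%MM.
by rewrite -scalerAl -scalerAr scalerA mpolyXD.
Qed.

Lemma monom_prod (I : eqType) (r : seq I) (F : I -> {mpoly R[n]}) :
  (forall i, i \in r -> monom (F i)) -> monom (\prod_(i <- r) F i).
Proof.
move=> monomF; rewrite big_seq; apply: big_ind => //; last exact: monomM.
by rewrite -mpolyC1; apply: monomC.
Qed.

Lemma monomXn u k : monom u -> monom (u ^+ k).
Proof.
move=> monom_u; elim: k => [|k IH]; last by rewrite exprS; apply: monomM.
by rewrite expr0 -mpolyC1; apply: monomC.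
Qed.

Lemma SOBS0 : SOBS (0 : {mpoly R[n]}).
Proof. by exists [::]; rewrite big_nil. Qed.

Lemma SOBSD p q : SOBS p -> SOBS q -> SOBS (p + q).
Proof. by move=> [s1 ->] [s2 ->]; exists (s1 ++ s2); rewrite big_cat. Qed.

Lemma SOBS_sum (I : Type) (r : seq I) (P : pred I) (F : I -> {mpoly R[n]}) :
  (forall i, P i -> SOBS (F i)) -> SOBS (\sum_(i <- r | P i) F i).
Proof. by move=> SOBS_F; apply: big_ind => //; [exact: SOBS0 | exact: SOBSD]. Qed.

Lemma SOBSZ (c : R) p : 0 <= c -> SOBS p -> SOBS (c *: p).
Proof.
move=> c_ge0 [s ->].
exists [seq (Num.sqrt c * t.1.1.1, t.1.1.2, Num.sqrt c * t.1.2, t.2) | t <- s].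
rewrite big_map scaler_sumr; apply: eq_bigr => t _ /=.
by rewrite -!scalerA -scalerBr exprZn sqr_sqrtr.
Qed.

Lemma SOBS_natrM (k : nat) p : SOBS p -> SOBS (k%:R * p).
Proof. by rewrite mulr_natl -scaler_nat; apply: SOBSZ. Qed.

Lemma SOBS_natrMK (k : nat) p : (0 < k)%N -> SOBS (k%:R * p) -> SOBS p.
Proof.
move=> k_gt0 /(SOBSZ (c := k%:R^-1)); rewrite invr_ge0 ler0n => /(_ isT).
by rewrite mulr_natl -scaler_nat scalerA mulVf ?scale1r // pnatr_eq0 -lt0n.
Qed.

Lemma SOBS_sqrB u v : monom u -> monom v -> SOBS ((u - v) ^+ 2).
Proof.
move=> [c [m ->]] [c' [m' ->]]; exists [:: (c, m, c', m')].
by rewrite big_seq1.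
Qed.

Lemma SOBS_sqrM u p : monom u -> SOBS p -> SOBS (u ^+ 2 * p).
Proof.
move=> [c [m ->]] [s ->].
exists [seq (c * t.1.1.1, (m + t.1.1.2)%MM, c * t.1.2, (m + t.2)%MM) | t <- s].
rewrite big_map mulr_sumr; apply: eq_bigr => t _ /=.
by rewrite -exprMn mulrBr !mpolyXD -!scalerA -!scalerAl -!scalerAr.
Qed.

End SOBSClosure.

Section TwoTermAMGM.
Variables (n : nat) (u v : {mpoly R[n]}).
Hypotheses (monom_u : monom u) (monom_v : monom v).
Let z := u ^+ 2.
Let w := v ^+ 2.

Lemma SOBS_subXnM k : SOBS ((z - w) * (z ^+ k - w ^+ k)).
Proof.
elim: k => [|k IH]; first by rewrite !expr0 subrr mulr0; exact: SOBS0.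
have -> : (z - w) * (z ^+ k.+1 - w ^+ k.+1) =
    u ^+ 2 * ((z - w) * (z ^+ k - w ^+ k)) + (v ^+ k) ^+ 2 * (u ^+ 2 - v ^+ 2) ^+ 2.
  by rewrite -exprM mulnC exprM /z /w !exprS; ring.
apply: SOBSD; first exact: SOBS_sqrM.
by apply/SOBS_sqrM/SOBS_sqrB; apply: monomXn.
Qed.

Lemma SOBS_amgm2_step t k :
  SOBS (t%:R * z ^+ (t + k) * (z - w) + w ^+ k.+1 * (w ^+ t - z ^+ t)).
Proof.
elim: t => [|t IH].
  by rewrite subrr mulr0 mulr0n !mul0r addr0; exact: SOBS0.
have -> : t.+1%:R * z ^+ (t.+1 + k) * (z - w) + w ^+ k.+1 * (w ^+ t.+1 - z ^+ t.+1)
    = u ^+ 2 * (t%:R * z ^+ (t + k) * (z - w) + w ^+ k.+1 * (w ^+ t - z ^+ t))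
      + (z - w) * (z ^+ (t + k).+1 - w ^+ (t + k).+1).
  by rewrite addSn !exprS !exprD mulrS /z; ring.
by apply: SOBSD; [exact: SOBS_sqrM | exact: SOBS_subXnM].
Qed.

Lemma SOBS_amgm2 t k :
  SOBS (t%:R * z ^+ (t + k) + k%:R * w ^+ (t + k) - (t + k)%:R * (z ^+ t * w ^+ k)).
Proof.
elim: k => [|k IH].
  by rewrite addn0 expr0 mulr1 mul0r addr0 subrr; exact: SOBS0.
have -> : t%:R * z ^+ (t + k.+1) + k.+1%:R * w ^+ (t + k.+1)
          - (t + k.+1)%:R * (z ^+ t * w ^+ k.+1)
    = v ^+ 2 * (t%:R * z ^+ (t + k) + k%:R * w ^+ (t + k) - (t + k)%:R * (z ^+ t * w ^+ k))
      + (t%:R * z ^+ (t + k) * (z - w) + w ^+ k.+1 * (w ^+ t - z ^+ t)).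
  by rewrite addnS !exprS !exprD !mulrS natrD /w; ring.
by apply: SOBSD; [exact: SOBS_sqrM | exact: SOBS_amgm2_step].
Qed.

End TwoTermAMGM.

Lemma prodr_exprM2 (S : comPzRingType) (I : Type) (r : seq I) (F : I -> S) (e : I -> nat) :
  \prod_(i <- r) F i ^+ (2 * e i) = (\prod_(i <- r) F i ^+ e i) ^+ 2.
Proof. by rewrite -prodrXl; apply: eq_bigr => i _; rewrite -exprM mulnC. Qed.

Lemma split_weights (T : Type) (s : seq (T * nat)) D : (D <= sumn (map snd s))%N ->
  exists t : seq (T * nat * nat),
    [seq (x.1.1, x.1.2 + x.2)%N | x <- t] = s /\ sumn [seq x.1.2 | x <- t] = D.
Proof.
elim: s D => [|[y b] s IH] D /=; first by rewrite leqn0 => /eqP ->; exists [::].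
move=> D_le; case: (leqP b D) => [b_le | D_lt].
  have [t [<- t_sum]] := IH (D - b)%N ltac:(by rewrite leq_subLR).
  by exists ((y, b, 0%N) :: t); rewrite /= addn0 t_sum subnKC.
have [t [<- t0]] := IH 0%N (leq0n _).
by exists ((y, D, (b - D)%N) :: t); rewrite /= t0 addn0 subnKC // ltnW.
Qed.

Section HurwitzForms.
Variable n : nat.
Implicit Types (s : seq ({mpoly R[n]} * nat)) (y : {mpoly R[n]}).

Definition hurwitz_form D s :=
  \sum_(x <- s) x.2%:R * x.1 ^+ (2 * D) - D%:R * \prod_(x <- s) x.1 ^+ (2 * x.2).

Lemma hurwitz_form_cons0 D y s : hurwitz_form D ((y, 0%N) :: s) = hurwitz_form D s.
Proof. by rewrite /hurwitz_form !big_cons /= muln0 !expr0 mul1r mul0r add0r. Qed.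

(* Hurwitz's reduction: merging two entries shortens the list, and the defect
   is a square times a two-term AM-GM form. *)
Lemma hurwitz_form_merge D y y' b b' s :
  (b + b')%:R * hurwitz_form D [:: (y, b), (y', b') & s] =
    b%:R * hurwitz_form D ((y, b + b')%N :: s) + b'%:R * hurwitz_form D ((y', b + b')%N :: s)
    + D%:R * ((\prod_(x <- s) x.1 ^+ x.2) ^+ 2 *
        (b%:R * (y ^+ 2) ^+ (b + b') + b'%:R * (y' ^+ 2) ^+ (b + b')
         - (b + b')%:R * ((y ^+ 2) ^+ b * (y' ^+ 2) ^+ b'))).
Proof.
rewrite /hurwitz_form !big_cons /= prodr_exprM2 !exprM natrD.
set A := \sum_(x <- s) _; set B := \prod_(x <- s) _.
ring.
Qed.

Lemma SOBS_hurwitz_form D s : sumn (map snd s) = D ->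
  (forall x, x \in s -> monom x.1) -> SOBS (hurwitz_form D s).
Proof.
have [N] := ubnP (size s); elim: N s D => // N IH [|[y b] s] D /ltnSE size_s /=.
  by move=> <- _; rewrite /hurwitz_form !big_nil mul0r subrr; exact: SOBS0.
move=> sum_s monom_s.
have monom_y : monom y by apply: (monom_s (y, b)); rewrite inE eqxx.
have {}monom_s x : x \in s -> monom x.1 by move=> x_s; apply: monom_s; rewrite inE x_s orbT.
have [b0 | b_gt0] := posnP b.
  by rewrite b0 hurwitz_form_cons0; apply: IH => //; rewrite -sum_s b0.
case: s => [|[y' b'] s] in IH size_s sum_s monom_s *.
  rewrite /= addn0 in sum_s; rewrite -sum_s /hurwitz_form !big_seq1 /= subrr.
  exact: SOBS0.
have monom_y' : monom y' by apply: (monom_s (y', b')); rewrite inE eqxx.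
have IH_merged y'' : monom y'' -> SOBS (hurwitz_form D ((y'', b + b')%N :: s)).
  move=> monom_y''; apply: IH => //=; first by rewrite -sum_s addnA.
  by move=> x; rewrite inE => /predU1P[-> // | x_s]; apply: monom_s; rewrite inE x_s orbT.
apply: (SOBS_natrMK (k := (b + b')%N)); first by rewrite addn_gt0 b_gt0.
rewrite hurwitz_form_merge; apply: SOBSD; first by apply: SOBSD; apply/SOBS_natrM/IH_merged.
apply/SOBS_natrM/SOBS_sqrM/SOBS_amgm2 => //.
by apply: monom_prod => x x_s; apply/monomXn/monom_s; rewrite inE x_s orbT.
Qed.

(* Split the weights into two halves summing to D each; the form is then the sum of
   two Hurwitz forms and D times the square of the difference of the half products. *)
Lemma SOBS_amgm D s : sumn (map snd s) = (2 * D)%N -> (forall x, x \in s -> monom x.1) ->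
  SOBS (\sum_(x <- s) x.2%:R * x.1 ^+ (2 * D) - (2 * D)%:R * \prod_(x <- s) x.1 ^+ x.2).
Proof.
move=> sum_s monom_s.
have [t [def_s sum_t1]] := @split_weights _ s D ltac:(by rewrite sum_s leq_pmull).
have sum_t2 : sumn [seq x.2 | x <- t] = D.
  have sumn_split : sumn [seq x.1.2 + x.2 | x <- t]%N =
      (sumn [seq x.1.2 | x <- t] + sumn [seq x.2 | x <- t])%N.
    by elim: (t) => //= x t' ->; rewrite addnACA.
  move: sum_s; rewrite -def_s -map_comp.
  by rewrite [sumn _]sumn_split sum_t1 mul2n -addnn => /addnI.
have monom_t x : x \in t -> monom x.1.1.
  by move=> x_t; apply: (monom_s (x.1.1, x.1.2 + x.2)%N); rewrite -def_s map_f.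
pose P1 := \prod_(x <- t) x.1.1 ^+ x.1.2.
pose P2 := \prod_(x <- t) x.1.1 ^+ x.2.
have -> : \sum_(x <- s) x.2%:R * x.1 ^+ (2 * D) - (2 * D)%:R * \prod_(x <- s) x.1 ^+ x.2
    = hurwitz_form D [seq (x.1.1, x.1.2) | x <- t]
      + hurwitz_form D [seq (x.1.1, x.2) | x <- t] + D%:R * (P1 - P2) ^+ 2.
  rewrite /hurwitz_form -def_s !big_map /= !prodr_exprM2.
  under eq_bigr => x _ do rewrite natrD mulrDl.
  under [\prod_(x <- t) x.1.1 ^+ (x.1.2 + x.2)]eq_bigr => x _ do rewrite exprD.
  rewrite !big_split /= -/P1 -/P2 natrM.
  set A := \sum_(x <- t) _; set B := \sum_(x <- t) _.
  ring.
have monom_seq (e : _ -> nat) : forall x, x \in [seq (x.1.1, e x) | x <- t] -> monom x.1.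
  by move=> _ /mapP[x x_t ->]; apply: monom_t.
apply: SOBSD; first apply: SOBSD.
- by apply: SOBS_hurwitz_form; [rewrite -map_comp | apply: monom_seq].
- by apply: SOBS_hurwitz_form; [rewrite -map_comp | apply: monom_seq].
- by apply/SOBS_natrM/SOBS_sqrB; apply: monom_prod => x x_t; apply/monomXn/monom_t.
Qed.

End HurwitzForms.

Lemma Rpower_gt0 (x y : R) : 0 < Rpower x y.
Proof. by apply/RltP; exact: exp_pos. Qed.

Lemma Rpower_invnK (y : R) (N : nat) : 0 < y -> (0 < N)%N -> Rpower y (/ INR N) ^+ N = y.
Proof.
move=> /RltP y_gt0 N_gt0.
rewrite -RpowE -Rpower_pow; last exact/RltP/Rpower_gt0.
rewrite Rpower_mult Rinv_l ?Rpower_1 //.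
by apply: not_0_INR => N0; rewrite N0 in N_gt0.
Qed.

Lemma exists_sign_flip n (al : 'X_{1..n}) (g : R) : g != 0 ->
  (g < 0 \/ exists i, odd (al i)) ->
  exists e : 'I_n -> R, (forall i, e i ^+ 2 = 1) /\ (\prod_(i < n) e i ^+ al i) * `|g| = - g.
Proof.
move=> g_neq0; case: (ltrP g 0) => [g_lt0 _ | g_ge0 [//|[i0 odd_i0]]].
  exists (fun=> 1); split=> [i|]; first by rewrite expr1n.
  by rewrite big1 ?mul1r ?ltr0_norm // => i _; rewrite expr1n.
exists (fun i => if i == i0 then -1 else 1); split=> [i|].
  by case: (i == i0); rewrite ?sqrrN expr1n.
rewrite (bigD1 i0) //= eqxx big1 ?mulr1; last by move=> i /negbTE ->; rewrite expr1n.
by rewrite -signr_odd odd_i0 expr1 ger0_norm // mulN1r.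
Qed.

Lemma mpow_gt0 n (b : 'I_n -> R) (al : 'X_{1..n}) :
  (forall i, (0 < al i)%N -> 0 < b i) -> 0 < mpow b al.
Proof.
move=> b_gt0; apply: prodr_gt0 => i _.
by case: (posnP (al i)) => [-> | al_gt0]; rewrite ?expr0 // exprn_gt0 ?b_gt0.
Qed.

Lemma mself_gt0 n (al : 'X_{1..n}) : 0 < mself al.
Proof. by apply: (@mpow_gt0 _ (fun i => (al i)%:R)) => i; rewrite ltr0n. Qed.

Section AMGMTerms.
Variables (n d : nat).
Local Notation N := (2 * d)%N.

Lemma SOBS_amgm_mpoly (al : 'X_{1..n}) (K : nat) (s : 'I_n -> R) (t : R) :
  (mdeg al + K = N)%N ->
  SOBS (\sum_(i < n) ((al i)%:R * s i ^+ N) *: 'X_[mpure N i] + (K%:R * t ^+ N)%:MP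
        - (N%:R * (\prod_(i < n) s i ^+ al i) * t ^+ K) *: 'X_[al]).
Proof.
move=> deg_al.
pose s0 := [seq (s i *: 'X_[U_(i)%MM], al i) | i <- index_enum 'I_n] ++ [:: (t%:MP, K)].
have sum_s0 : sumn (map snd s0) = N.
  by rewrite map_cat sumn_cat /= addn0 -map_comp sumnE big_map -deg_al mdegE.
have monom_s0 x : x \in s0 -> monom x.1.
  rewrite mem_cat => /orP[/mapP[i _ ->] | /[1!inE] /eqP -> /=]; last exact: monomC.
  by exists (s i), U_(i)%MM.
have := SOBS_amgm sum_s0 monom_s0; congr SOBS.
rewrite !big_cat !big_map !big_seq1 /=.
congr (_ + _ - _).
- apply: eq_bigr => i _.
  by rewrite mulr_natl -scaler_nat exprZn mpolyXn scalerA.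
- by rewrite -rmorphXn -mpolyC_nat -mpolyCM.
under eq_bigr => i _ do rewrite exprZn mpolyXn.
rewrite scaler_prod -(big_morph _ (@mpolyXD _ _) (@mpolyX0 _ _)) -multinomUE_id.
by rewrite -rmorphXn mulr_natl -scaler_nat -scalerAl mulrC mul_mpolyC !scalerA mulrAC.
Qed.

(* The coefficients are matched with those of [SOBS_amgm_mpoly] by taking
   N-th roots: s i = ± (b i / al i)^(1/N) and t = tau^(1/N); the signs make the
   coefficient of X^al negative. *)
Lemma SOBS_amgm_term (al : 'X_{1..n}) (b : 'I_n -> R) (tau g : R) :
  (0 < d)%N -> (mdeg al <= N)%N -> g != 0 -> (g < 0 \/ exists i, odd (al i)) ->
  (forall i, 0 <= b i) -> (forall i, b i = 0 <-> al i = 0%N) -> 0 < tau ->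
  N%:R ^+ N * mpow b al * tau ^+ (N - mdeg al) = `|g| ^+ N * mself al ->
  SOBS (\sum_(i < n) b i *: 'X_[mpure N i] + ((N - mdeg al)%:R * tau)%:MP + g *: 'X_[al]).
Proof.
move=> d_gt0 deg_al g_neq0 sign_g b_ge0 b0 tau_gt0 mpow_b.
have N_gt0 : (0 < N)%N by rewrite muln_gt0.
have NR_neq0 : (N%:R : R) != 0 by rewrite pnatr_eq0 -lt0n.
have b_gt0 i : (0 < al i)%N -> 0 < b i.
  by move=> al_gt0; rewrite lt_def b_ge0 andbT; apply/eqP => /b0 al0; rewrite al0 in al_gt0.
set K := (N - mdeg al)%N in mpow_b *.
pose r i := Rpower (b i / (al i)%:R) (/ INR N).
pose t := Rpower tau (/ INR N).
have r_root i : (0 < al i)%N -> r i ^+ N = b i / (al i)%:R.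
  by move=> al_gt0; rewrite Rpower_invnK // divr_gt0 ?b_gt0 ?ltr0n.
have t_root : t ^+ N = tau by rewrite Rpower_invnK.
have al_r i : (al i)%:R * r i ^+ N = b i.
  case: (posnP (al i)) => [al0 | al_gt0]; first by rewrite al0 mul0r; apply/esym/b0.
  by rewrite r_root // mulrC divfK // pnatr_eq0 -lt0n.
pose M := (\prod_(i < n) r i ^+ al i) * t ^+ K.
have M_ge0 : 0 <= M.
  by rewrite mulr_ge0 ?prodr_ge0 // => *; rewrite exprn_ge0 // ltW // Rpower_gt0.
have M_pow : M ^+ N = (`|g| / N%:R) ^+ N.
  have mpow_r : (\prod_(i < n) r i ^+ al i) ^+ N = mpow b al / mself al.
    have r_al i : (r i ^+ al i) ^+ N = b i ^+ al i / (al i)%:R ^+ al i.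
      case: (posnP (al i)) => [-> | al_gt0]; first by rewrite !expr0 expr1n divr1.
      by rewrite -exprM mulnC exprM r_root // expr_div_n.
    by rewrite -prodrXl (eq_bigr _ (fun i _ => r_al i)) prodf_div.
  rewrite exprMn mpow_r -exprM mulnC exprM t_root expr_div_n.
  have mself_neq0 : mself al != 0 by rewrite gt_eqF ?mself_gt0.
  rewrite -(mulfK mself_neq0 (`|g| ^+ N)) -mpow_b; field.
  by rewrite mself_neq0 expf_neq0.
have M_eq : M = `|g| / N%:R.
  by apply: (pexpIrn N_gt0); rewrite ?nnegrE ?divr_ge0 ?ler0n.
have [e [e_sqr e_sign]] := exists_sign_flip g_neq0 sign_g.
have := @SOBS_amgm_mpoly al K (fun i => e i * r i) t ltac:(by rewrite subnKC).
congr SOBS; congr (_ + _ + _).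
- apply: eq_bigr => i _.
  by rewrite exprMn exprM e_sqr expr1n mul1r al_r.
- by rewrite t_root.
rewrite -scaleNr; congr (_ *: _); apply: oppr_inj; rewrite opprK -e_sign.
have -> : `|g| = N%:R * M by rewrite M_eq mulrC (divfK NR_neq0).
rewrite (eq_bigr (fun i => e i ^+ al i * r i ^+ al i)) => [|i _]; last exact: exprMn.
by rewrite big_split /= /M; ring.
Qed.

End AMGMTerms.

Lemma SOBS_even_nneg n (p : {mpoly R[n]}) :
  (forall m, p@_m != 0 -> 0 <= p@_m /\ forall i, ~~ odd (m i)) -> SOBS p.
Proof.
move=> p_even; rewrite (mpolyE p) big_seq; apply: SOBS_sum => m.
rewrite mcoeff_msupp => /p_even[p_ge0 m_even].
exists [:: (Num.sqrt p@_m, [multinom (m i)./2 | i < n], 0, 0%MM)].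
rewrite big_seq1 /= scale0r subr0 exprZn sqr_sqrtr // mpolyXn; congr (_ *: 'X_[_]).
apply/mnmP => i; rewrite mulmnE mnmE muln2.
by rewrite -{1}(odd_double_half (m i)) (negbTE (m_even i)) add0n.
Qed.

Lemma mpureE n k (i j : 'I_n) : mpure k i j = ((i == j) * k)%N.
Proof. by rewrite /mpure mulmnE mnm1E. Qed.

Lemma eq_mpure n k (i j : 'I_n) : (0 < k)%N -> (mpure k i == mpure k j) = (i == j).
Proof.
move=> k_gt0; apply/eqP/eqP => [/mnmP/(_ j) | -> //].
rewrite !mpureE eqxx mul1n; case: eqP => //= _.
by rewrite mul0n => k0; move: k_gt0; rewrite -k0.
Qed.

Lemma mpure_eq0 n k (i : 'I_n) : (mpure k i == 0%MM) = (k == 0%N).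
Proof.
apply/eqP/eqP => [/mnmP/(_ i) | ->]; first by rewrite mpureE eqxx mul1n mnm0E.
by rewrite /mpure mulm0n.
Qed.

Lemma inDelta_inOmega n d (f : {mpoly R[n]}) alpha : inDelta d f alpha -> inOmega d f alpha.
Proof. by case/andP. Qed.

Section DeltaDecomposition.
Variables (n d : nat) (f : {mpoly R[n]}) (r : R) (a : 'X_{1..n} -> 'I_n -> R).
Local Notation N := (2 * d)%N.
Local Notation Delta := (inDelta d f).

(* As in (3), [/] and [*] inside the argument of [Rpower] are Stdlib's [Rdiv] and
   [Rmult]. *)
Definition delta_const (alpha : 'X_{1..n}) :=
  ((N - mdeg alpha)%:R : R)
  * Rpower (`|f@_alpha| ^+ N * mself alpha / (N%:R ^+ N * mpow (a alpha) alpha))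
           (/ INR (N - mdeg alpha)).

Definition delta_poly (alpha : 'X_{1..n}) : {mpoly R[n]} :=
  \sum_(i < n) a alpha i *: 'X_[mpure N i] + (delta_const alpha)%:MP + f@_alpha *: 'X_[alpha].

Local Notation residual :=
  (f - r%:MP - \sum_(alpha <- msupp f | Delta alpha) delta_poly alpha).

Hypothesis d_gt0 : (0 < d)%N.
Hypothesis size_f : msize f = N.+1.
Hypothesis a_ge0 : forall alpha i, Delta alpha -> 0 <= a alpha i.
Hypothesis a_eq0 : forall alpha i, Delta alpha -> (a alpha i = 0 <-> alpha i = 0%N).
Hypothesis mpow_a : forall alpha, Delta alpha -> mdeg alpha = N ->
  N%:R ^+ N * mpow (a alpha) alpha = `|f@_alpha| ^+ N * mself alpha.
Hypothesis sum_a_le : forall i : 'I_n,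
  \sum_(alpha <- msupp f | Delta alpha) a alpha i <= f@_(mpure N i).
Hypothesis sum_delta_const_le :
  \sum_(alpha <- msupp f | Delta alpha && (mdeg alpha < N)%N) delta_const alpha <= f@_0%MM - r.

Let N_gt0 : (0 < N)%N. Proof. by rewrite muln_gt0. Qed.
Let N_neq0 : (N == 0)%N = false. Proof. by rewrite eqn0Ngt N_gt0. Qed.

Lemma SOBS_delta_poly alpha : alpha \in msupp f -> Delta alpha -> SOBS (delta_poly alpha).
Proof.
move=> alpha_f Delta_alpha.
have deg_alpha : (mdeg alpha <= N)%N.
  by have := msize_mdeg_lt alpha_f; rewrite size_f ltnS.
have f_alpha : f@_alpha != 0 by rewrite -mcoeff_msupp.
have a_gt0 i : (0 < alpha i)%N -> 0 < a alpha i.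
  move=> alpha_gt0; rewrite lt_def a_ge0 // andbT; apply/eqP => /(a_eq0 _ Delta_alpha) a0.
  by rewrite a0 in alpha_gt0.
apply: SOBS_amgm_term => //.
- by move: Delta_alpha => /andP[_ /orP[|/existsP[i odd_i]]]; [left | right; exists i].
- by move=> i; apply: a_ge0.
- by move=> i; apply: a_eq0.
- exact: Rpower_gt0.
case: (posnP (N - mdeg alpha)) => [K0 | K_gt0].
  by rewrite K0 mulr1 mpow_a //; apply/eqP; rewrite eqn_leq deg_alpha -subn_eq0 K0.
have mpow_a_gt0 : 0 < mpow (a alpha) alpha by exact: mpow_gt0 a_gt0.
rewrite RdivE !RmultE Rpower_invnK // ?divr_gt0 ?mulr_gt0 ?exprn_gt0 ?normr_gt0 ?ltr0n ?mself_gt0 //.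
by field; rewrite expf_neq0 ?pnatr_eq0 -?lt0n //= gt_eqF.
Qed.

Lemma mcoeff_delta_poly alpha m : (delta_poly alpha)@_m =
  \sum_(i < n) a alpha i * (mpure N i == m)%:R + delta_const alpha * (m == 0%MM)%:R
  + f@_alpha * (alpha == m)%:R.
Proof.
rewrite !mcoeffD mcoeffC mcoeffZ mcoeffX raddf_sum /=.
by congr (_ + _ + _); apply: eq_bigr => i _; rewrite mcoeffZ mcoeffX.
Qed.

Lemma mcoeff_residual m : residual@_m =
  f@_m - r * (m == 0%MM)%:R - \sum_(alpha <- msupp f | Delta alpha) (delta_poly alpha)@_m.
Proof. by rewrite !mcoeffB mcoeffC raddf_sum. Qed.

Lemma residual_coef0 :
  residual@_0%MM = f@_0%MM - r - \sum_(alpha <- msupp f | Delta alpha) delta_const alpha.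
Proof.
rewrite mcoeff_residual eqxx mulr1; congr (_ - _); apply: eq_bigr => alpha Delta_alpha.
have /and3P[_ alpha_neq0 _] := inDelta_inOmega Delta_alpha.
rewrite mcoeff_delta_poly big1 ?add0r => [|i _]; last by rewrite mpure_eq0 N_neq0 mulr0.
by rewrite (negbTE alpha_neq0) eqxx mulr1 mulr0 addr0.
Qed.

Lemma residual_coef_pure j :
  residual@_(mpure N j) = f@_(mpure N j) - \sum_(alpha <- msupp f | Delta alpha) a alpha j.
Proof.
rewrite mcoeff_residual mpure_eq0 N_neq0 mulr0 subr0; congr (_ - _).
apply: eq_bigr => alpha Delta_alpha.
have /and3P[_ _ /forallP/(_ j)/negbTE alpha_nonpure] := inDelta_inOmega Delta_alpha.
rewrite mcoeff_delta_poly alpha_nonpure mpure_eq0 N_neq0 !mulr0 !addr0.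
rewrite (bigD1 j) //= eqxx mulr1 big1 ?addr0 // => i i_neq_j.
by rewrite eq_mpure // (negbTE i_neq_j) mulr0.
Qed.

Lemma residual_coef_other m : m != 0%MM -> (forall i, m != mpure N i) ->
  residual@_m = if Delta m then 0 else f@_m.
Proof.
move=> m_neq0 m_nonpure.
rewrite mcoeff_residual (negbTE m_neq0) mulr0 subr0.
rewrite (eq_bigr (fun alpha => f@_alpha * (alpha == m)%:R)) => [|alpha _]; last first.
  rewrite mcoeff_delta_poly (negbTE m_neq0) mulr0 addr0 big1 ?add0r // => i _.
  by rewrite eq_sym (negbTE (m_nonpure i)) mulr0.
case: ifP => [Delta_m | Delta_m]; last first.
  rewrite big1 ?subr0 // => alpha Delta_alpha.
  by case: eqP => [alpha_m | _]; [rewrite alpha_m Delta_m in Delta_alpha | rewrite mulr0].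
have /and3P[f_m _ _] := inDelta_inOmega Delta_m.
rewrite big_mkcond (bigD1_seq m) ?msupp_uniq ?mcoeff_msupp //= Delta_m eqxx mulr1.
by rewrite big1 ?addr0 ?subrr // => alpha /negbTE ->; rewrite mulr0 if_same.
Qed.

Lemma residual_coef_even_nneg m :
  residual@_m != 0 -> 0 <= residual@_m /\ forall i, ~~ odd (m i).
Proof.
have [-> _ | m_neq0 residual_m] := eqVneq m 0%MM.
  split=> [|i]; last by rewrite mnm0E.
  rewrite residual_coef0 subr_ge0; apply: le_trans sum_delta_const_le.
  rewrite [X in _ <= X]big_mkcondr /=; apply: ler_sum => alpha _; case: ltnP => // deg_alpha.
  have K0 : (N - mdeg alpha = 0)%N by apply/eqP; rewrite subn_eq0.
  by rewrite /delta_const K0 mul0r.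
have [/existsP[j /eqP ->] | /existsPn m_nonpure] := boolP [exists j, m == mpure N j].
  split=> [|i]; first by rewrite residual_coef_pure subr_ge0.
  by rewrite mpureE oddM oddM /= andbF.
rewrite residual_coef_other // in residual_m *.
case: ifP residual_m => [_ /eqP // | Delta_m f_m].
have Omega_m : inOmega d f m by rewrite /inOmega f_m m_neq0; apply/forallP.
move: Delta_m; rewrite /inDelta Omega_m /= => /norP[f_m_nlt0 /existsPn m_even].
by rewrite leNgt.
Qed.

End DeltaDecomposition.

Theorem theorem3p1 (n d : nat) (f : {mpoly R[n]}) (r : R)
  (hd : (0 < d)%N) (hdeg : msize f = (2 * d).+1)
  (a : 'X_{1..n} -> 'I_n -> R)
  (ha_nonneg : forall alpha i, inDelta d f alpha -> 0 <= a alpha i)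
  (ha_zero : forall alpha i, inDelta d f alpha -> (a alpha i = 0 <-> alpha i = 0%N))
  (h1 : forall alpha, inDelta d f alpha -> mdeg alpha = (2 * d)%N ->
          ((2 * d)%:R) ^+ (2 * d) * mpow (a alpha) alpha
          = `|f@_alpha| ^+ (2 * d) * mself alpha)
  (h2 : forall i : 'I_n,
          \sum_(alpha <- msupp f | inDelta d f alpha) a alpha i
          <= f@_(mpure (2 * d) i))
  (h3 : \sum_(alpha <- msupp f | inDelta d f alpha && (mdeg alpha < 2 * d)%N)
          ((2 * d - mdeg alpha)%:R
           * Rpower (`|f@_alpha| ^+ (2 * d) * mself alpha
                     / (((2 * d)%:R) ^+ (2 * d) * mpow (a alpha) alpha))
                    (/ INR (2 * d - mdeg alpha)))
        <= f@_0%MM - r) :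
  SOBS (f - r%:MP).
Proof.
rewrite -(subrK (\sum_(alpha <- msupp f | inDelta d f alpha) delta_poly d f a alpha) (f - r%:MP)).
apply: SOBSD.
  by apply: SOBS_even_nneg => m; apply: (residual_coef_even_nneg hd h2 h3).
rewrite big_seq_cond; apply: SOBS_sum => alpha /andP[alpha_f Delta_alpha].
exact: (SOBS_delta_poly hd hdeg ha_nonneg ha_zero h1 alpha_f Delta_alpha).
Qed.
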